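(* For a prime $p$ and integers $k$ and $h\ge1$, let $U(p;k,h)$ denote the number of $u\in\{0,\ldots,p-1\}$ such that $q_p(u)\equiv z\pmod p$ for some integer $z\in[k+1,k+h]$. Then for any integers $k$ and $h\ge 1$ we have $U(p;k,h)\le h^{1/2}p^{1/2+o(1)}$ as $p\to\infty$.
   Context: For a prime $p$ and an integer $u$ with $\gcd(u,p)=1$, the Fermat quotient $q_p(u)$ is the unique integer with $q_p(u)\equiv (u^{p-1}-1)/p \pmod p$ and $0\le q_p(u)\le p-1$; also $q_p(kp)=0$ for all $k\in\mathbb{Z}$. *)

From Stdlib Require Import ZArith Znumtheory List Reals.
Open Scope Z_scope.

(* Fermat quotient q_p(u): for u not divisible by p (p prime, so gcd(u,p)=1)
   it is the residue in [0, p-1] of (u^(p-1) - 1)/p (an exact division by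
   Fermat's little theorem); q_p(kp) = 0. *)
Definition fermat_quotient (p u : Z) : Z :=
  if u mod p =? 0 then 0 else ((u ^ (p - 1) - 1) / p) mod p.

Definition in_U (p k h u : Z) : bool :=
  existsb (fun j : nat => (fermat_quotient p u - (k + 1 + Z.of_nat j)) mod p =? 0)
          (seq 0 (Z.to_nat h)).

Definition U (p k h : Z) : nat :=
  length (filter (in_U p k h) (map Z.of_nat (seq 0 (Z.to_nat p)))).

(* Let L be the set of nonzero residues counted by U(p;k,h).  For u, v in L the product
   n = u v is an integer in (0, p^2) whose Fermat quotient is q_p(u) + q_p(v) (mod p), so it lies
   in one of 2h classes mod p.  Since (n + p b)^(p-1) = n^(p-1) - p b n^(p-2) (mod p^2), the pair
   (n mod p, q_p(n)) determines n in (0, p^2).  Sorting the |L|^2 pairs (u, v) into the 2hp boxes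
   given by u v mod p and q_p(u) + q_p(v), all pairs of a box have the same product n, so a box holds
   at most tau(n) pairs, and tau(n)^m <= C_m n <= C_m p^2.  Hence |L|^2 <= 2hp (C_m p^2)^(1/m),
   and m >= 2/eps gives the bound. *)

From Stdlib Require Import ZArith Znumtheory Zpow_facts List Reals Lia Lra.
From mathcomp Require ssreflect ssrbool eqtype ssrnat seq div prime binomial zify.

Module NatNumberTheory.
Import ssreflect ssrbool eqtype ssrnat seq div prime binomial zify.
Local Open Scope nat_scope.

Lemma bin_le_exp2 n m : 'C(n, m) <= 2 ^ n.
Proof.
elim: n m => [|n IHn] [|m] //; first by rewrite bin0 expn_gt0.
by rewrite binS expnS mul2n -addnn leq_add.
Qed.

Lemma expS_le_ffact m a : a.+1 ^ m <= (a + m) ^_ m.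
Proof.
elim: m => [|m IHm] //; by rewrite addnS ffactSS expnS leq_mul // ltnS leq_addr.
Qed.

Lemma expS_le_exp2 m a : a.+1 ^ m <= m`! * 2 ^ m * 2 ^ a.
Proof.
apply: leq_trans (expS_le_ffact m a) _.
by rewrite -bin_ffact -mulnA -expnD mulnC leq_mul2l addnC bin_le_exp2 orbT.
Qed.

Lemma expS_le_large_prime m a q : 2 ^ m <= q -> a.+1 ^ m <= q ^ a.
Proof.
move=> le_2m_q; apply: (@leq_trans ((2 ^ a) ^ m)).
  by case: m le_2m_q => [|m] // _; rewrite leq_exp2r // ltn_expl.
by rewrite expnAC; case: a => [|a] //; rewrite leq_exp2r.
Qed.

Lemma leq_expn2r e m n : m <= n -> m ^ e <= n ^ e.
Proof. by move=> le_mn; elim: e => // e IHe; rewrite !expnS leq_mul. Qed.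
Arguments leq_expn2r e [m n].

Lemma size_divisors_pexp_mul q a r : prime q -> coprime q r -> 0 < r ->
  size (divisors (q ^ a * r)) <= a.+1 * size (divisors r).
Proof.
move=> q_pr cop_qr r_gt0; have q_gt1 := prime_gt1 q_pr.
have n_gt0 : 0 < q ^ a * r by rewrite muln_gt0 expn_gt0 (ltnW q_gt1).
rewrite -(size_iota 0 a.+1) -(size_allpairs (fun i e => q ^ i * e)).
apply: uniq_leq_size; first exact: divisors_uniq.
move=> d; rewrite -dvdn_divisors // => dvd_d_n.
have d_gt0 : 0 < d by apply: dvdn_gt0 dvd_d_n.
have [e cop_qe def_d] := pfactor_coprime q_pr d_gt0.
set i := logn q d in def_d.
apply/allpairsP; exists (i, e); split.
- rewrite mem_iota /= ltnS -(dvdn_Pexp2l _ _ q_gt1) -(@Gauss_dvdl _ _ r).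
    by apply: dvdn_trans dvd_d_n; rewrite def_d dvdn_mull.
  by rewrite coprimeXl.
- have e_gt0 : 0 < e by move: d_gt0; rewrite def_d muln_gt0 => /andP[].
  rewrite -dvdn_divisors // -(@Gauss_dvdr _ (q ^ a)); last first.
    by rewrite coprimeXr // coprime_sym.
  by apply: dvdn_trans dvd_d_n; rewrite def_d dvdn_mulr.
- by rewrite def_d mulnC.
Qed.

Lemma size_divisors_exp_le m (s : seq nat) n : 0 < n ->
  (forall q, prime q -> q %| n -> q < 2 ^ m -> q \in s) ->
  size (divisors n) ^ m <= (m`! * 2 ^ m) ^ size s * n.
Proof.
elim/ltn_ind: n s => n IHn s n_gt0 small_in_s.
have K_gt0 : 0 < m`! * 2 ^ m by rewrite muln_gt0 fact_gt0 expn_gt0.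
have [n_le1 | n_gt1] := leqP n 1.
  have -> : n = 1 by apply/eqP; rewrite eqn_leq n_le1.
  by rewrite exp1n muln1 expn_gt0 K_gt0.
have q_pr := pdiv_prime n_gt1; have q_dvd := pdiv_dvd n.
set q := pdiv n in q_pr q_dvd.
have a_gt0 : 0 < logn q n by rewrite logn_gt0 mem_primes q_pr n_gt0 q_dvd.
have [r cop_qr def_n] := pfactor_coprime q_pr n_gt0.
set a := logn q n in a_gt0 def_n.
have r_gt0 : 0 < r by move: n_gt0; rewrite def_n muln_gt0 => /andP[].
have r_lt_n : r < n.
  by rewrite def_n -{1}(muln1 r) ltn_mul2l r_gt0 -(expn0 q) ltn_exp2l ?prime_gt1.
have dvd_r_n d : d %| r -> d %| n.
  by move/dvdn_trans; apply; rewrite def_n dvdn_mulr.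
have size_n : size (divisors n) <= a.+1 * size (divisors r).
  by rewrite {1}def_n mulnC size_divisors_pexp_mul.
apply: leq_trans (leq_expn2r m size_n) _.
rewrite expnMn def_n [r * _]mulnC.
have [large_q | small_q] := leqP (2 ^ m) q.
  rewrite mulnCA; apply: leq_mul; first exact: expS_le_large_prime.
  apply: (IHn r r_lt_n s r_gt0) => q' q'_pr /dvd_r_n; exact: small_in_s.
have q_in_s : q \in s := small_in_s q q_pr q_dvd small_q.
have s_gt0 : 0 < size s by case: (s) q_in_s.
rewrite -(prednK s_gt0) expnS mulnACA.
apply: leq_mul.
  apply: leq_trans (expS_le_exp2 m a) _.
  by rewrite leq_mul2l leq_expn2r ?prime_gt1 ?orbT.
rewrite -(size_rem q_in_s); apply: (IHn r r_lt_n _ r_gt0) => q' q'_pr q'_dvd small_q'.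
apply: rem_mem; last by apply: small_in_s; rewrite ?dvd_r_n.
by apply: contraTneq cop_qr => <-; rewrite prime_coprime // q'_dvd.
Qed.

Lemma size_divisors_exp_bound m n : 0 < n ->
  size (divisors n) ^ m <= (m`! * 2 ^ m) ^ 2 ^ m * n.
Proof.
move=> n_gt0; rewrite -{2}(size_iota 0 (2 ^ m)).
by apply: size_divisors_exp_le => // q _ _ small_q; rewrite mem_iota.
Qed.

Lemma fermat_little_pred p a : prime p -> ~~ (p %| a) -> p %| a ^ p.-1 - 1.
Proof.
move=> p_pr p_ndvd_a.
have a_gt0 : 0 < a by case: a p_ndvd_a; rewrite ?dvdn0.
have exp_p : a ^ p = a * a ^ p.-1 by rewrite -expnS prednK ?prime_gt0.
have /eqP := fermat_little a p_pr.
rewrite exp_p eqn_mod_dvd ?leq_pmulr ?expn_gt0 ?a_gt0 // -{3}(muln1 a) -mulnBr.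
by rewrite Gauss_dvdr // prime_coprime.
Qed.

Lemma prime_Z_to_nat (p : Z) : Znumtheory.prime p -> prime (Z.to_nat p).
Proof.
move=> p_pr; have p_ge2 := prime_ge_2 p p_pr.
apply/primeP; split; first by apply/ltP; lia.
move=> d /dvdnP [c def_p].
have d_dvd_p : (Z.of_nat d | p)%Z.
  by exists (Z.of_nat c); nia.
have d_ge0 : (0 <= Z.of_nat d)%Z by lia.
case: (prime_divisors p p_pr _ d_dvd_p) => [|[|[|]]] E; apply/orP; lia.
Qed.

Lemma fermat_little_Z (p u : Z) : Znumtheory.prime p -> (0 < u)%Z -> ~ (p | u)%Z ->
  (p | u ^ (p - 1) - 1)%Z.
Proof.
move=> p_pr u_gt0 p_ndvd_u; have p_ge2 := prime_ge_2 p p_pr.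
have P_pr := prime_Z_to_nat _ p_pr.
have : Z.to_nat p %| Z.to_nat u ^ (Z.to_nat p).-1 - 1.
  apply: fermat_little_pred => //; apply/negP => /dvdnP [c def_u]; apply: p_ndvd_u.
  by exists (Z.of_nat c); lia.
move/dvdnP => [c def_c]; exists (Z.of_nat c).
have pow_gt0 : 0 < Z.to_nat u ^ (Z.to_nat p).-1 by rewrite expn_gt0; lia.
have -> : (u ^ (p - 1) = Z.of_nat (Z.to_nat u) ^ Z.of_nat (Z.to_nat p).-1)%Z.
  by congr Z.pow; lia.
lia.
Qed.

Lemma inP (T : eqType) (x : T) (s : seq T) : reflect (In x s) (x \in s).
Proof.
elim: s => [|y s IHs]; first by constructor.
rewrite in_cons; apply: (iffP orP) => [[/eqP->|/IHs]|[->|/IHs]]; by [left|right|rewrite eqxx].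
Qed.

Lemma NoDupP (T : eqType) (s : seq T) : reflect (NoDup s) (uniq s).
Proof.
elim: s => [|x s IHs]; first by constructor; constructor.
rewrite cons_uniq; apply: (iffP andP) => [[x_notin /IHs]|/NoDup_cons_iff[x_notin /IHs]].
  by constructor => // /inP; apply/negP.
by split => //; apply/negP => /inP.
Qed.

Lemma divisor_list_bound m : exists C : Z, (0 < C)%Z /\
  forall (n : Z) (l : list Z), (0 < n)%Z -> NoDup l ->
    (forall d, In d l -> (0 < d)%Z /\ (d | n)%Z) ->
    (Z.of_nat (length l) ^ Z.of_nat m <= C * n)%Z.
Proof.
have K_gt0 : 0 < (m`! * 2 ^ m) ^ 2 ^ m by rewrite !expn_gt0 muln_gt0 fact_gt0 expn_gt0.
exists (Z.of_nat ((m`! * 2 ^ m) ^ 2 ^ m)); split=> [|n l n_gt0 l_uniq l_dvd]; first by lia.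
have N_gt0 : 0 < Z.to_nat n by lia.
have size_l : size (map Z.to_nat l) <= size (divisors (Z.to_nat n)).
  apply: uniq_leq_size => [|_ /inP /in_map_iff [d [<- /l_dvd [d_gt0 [c def_n]]]]].
    apply/NoDupP/NoDup_map_NoDup_ForallPairs => // d e /l_dvd ? /l_dvd ? /=; lia.
  by rewrite -dvdn_divisors //; apply/dvdnP; exists (Z.to_nat c); nia.
have := leq_trans (leq_expn2r m size_l) (size_divisors_exp_bound m _ N_gt0).
have -> : size (map Z.to_nat l) = length l by rewrite size_map; elim: (l) => //= ? ? ->.
lia.
Qed.

End NatNumberTheory.

Open Scope Z_scope.

Lemma pow_add_first_order (x c e : Z) : 1 <= e ->
  exists t, (x + c) ^ e = x ^ e + e * c * x ^ (e - 1) + c ^ 2 * t.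
Proof.
  intros e_ge1. pattern e. apply Z.le_ind with (n := 1); [| | |exact e_ge1].
  - intros a b ->. reflexivity.
  - exists 0. rewrite Z.sub_diag, Z.pow_0_r, !Z.pow_1_r. ring.
  - intros f f_ge1 [t IH]. exists (f * x ^ (f - 1) + t * (x + c)).
    assert (x_pow : x ^ f = x * x ^ (f - 1)).
    { rewrite <- Z.pow_succ_r by lia. f_equal. lia. }
    replace (Z.succ f - 1) with f by lia.
    rewrite !Z.pow_succ_r, IH, x_pow by lia. ring.
Qed.

Definition fermat_quotient_int (p u : Z) : Z := (u ^ (p - 1) - 1) / p.

Section FermatQuotient.
Variable p : Z.
Hypothesis p_prime : prime p.

Let p_ge2 : 2 <= p := prime_ge_2 p p_prime.

Lemma pow_pred_fermat_quotient_int u : 0 < u -> ~ (p | u) ->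
  u ^ (p - 1) = 1 + p * fermat_quotient_int p u.
Proof.
  intros u_gt0 p_ndvd_u. unfold fermat_quotient_int.
  destruct (NatNumberTheory.fermat_little_Z p u p_prime u_gt0 p_ndvd_u) as [c Hc].
  rewrite Hc, Z.div_mul by lia. lia.
Qed.

Lemma fermat_quotient_int_mul u v : 0 < u -> 0 < v -> ~ (p | u) -> ~ (p | v) ->
  fermat_quotient_int p (u * v) =
  fermat_quotient_int p u + fermat_quotient_int p v + p * fermat_quotient_int p u * fermat_quotient_int p v.
Proof.
  intros u_gt0 v_gt0 p_ndvd_u p_ndvd_v. unfold fermat_quotient_int at 1.
  rewrite Z.pow_mul_l, !pow_pred_fermat_quotient_int by assumption.
  match goal with |- (?a - 1) / p = ?q => replace (a - 1) with (q * p) by ring end.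
  apply Z.div_mul. lia.
Qed.

Lemma fermat_quotient_mod u : ~ (p | u) -> fermat_quotient p u = fermat_quotient_int p u mod p.
Proof.
  intros p_ndvd_u. unfold fermat_quotient.
  destruct (Z.eqb_spec (u mod p) 0) as [E|]; [|reflexivity].
  exfalso. apply p_ndvd_u, Z.mod_divide; lia.
Qed.

Lemma fermat_quotient_int_mul_mod u v : 0 < u -> 0 < v -> ~ (p | u) -> ~ (p | v) ->
  fermat_quotient_int p (u * v) mod p = (fermat_quotient p u + fermat_quotient p v) mod p.
Proof.
  intros u_gt0 v_gt0 p_ndvd_u p_ndvd_v.
  rewrite fermat_quotient_int_mul, !fermat_quotient_mod by assumption.
  rewrite <- Z.add_mod by lia.
  match goal with |- (?a + ?b + ?c) mod p = _ => replace c with ((fermat_quotient_int p u * fermat_quotient_int p v) * p) by ring end.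
  apply Z.mod_add. lia.
Qed.

Lemma fermat_quotient_int_shift n b : 0 < n -> 0 < n + p * b -> ~ (p | n) ->
  exists t, fermat_quotient_int p (n + p * b) =
            fermat_quotient_int p n + (p - 1) * b * n ^ (p - 2) + p * b ^ 2 * t.
Proof.
  intros n_gt0 nb_gt0 p_ndvd_n.
  assert (p_ndvd_nb : ~ (p | n + p * b)).
  { intros D. apply p_ndvd_n. replace n with (n + p * b - b * p) by ring.
    apply Z.divide_sub_r; [exact D|apply Z.divide_factor_r]. }
  destruct (pow_add_first_order n (p * b) (p - 1)) as [t Ht]; [lia|].
  rewrite !pow_pred_fermat_quotient_int in Ht by assumption.
  exists t. apply (Z.mul_reg_l _ _ p); [lia|].
  replace (p - 1 - 1) with (p - 2) in Ht by ring. nia.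
Qed.

Lemma fermat_quotient_int_inj n1 n2 : 0 < n1 < p * p -> 0 < n2 < p * p -> ~ (p | n1) ->
  n1 mod p = n2 mod p -> fermat_quotient_int p n1 mod p = fermat_quotient_int p n2 mod p ->
  n1 = n2.
Proof.
  intros n1_bound n2_bound p_ndvd_n1 mod_eq quot_eq.
  destruct (proj1 (Z.mod_divide (n2 - n1) p ltac:(lia))) as [b def_b].
  { rewrite Zminus_mod, mod_eq, Z.sub_diag. reflexivity. }
  assert (b_bound : - p < b < p) by nia.
  replace n2 with (n1 + p * b) in * by lia.
  destruct (fermat_quotient_int_shift n1 b) as [t shift]; [lia|lia|exact p_ndvd_n1|].
  rewrite shift in quot_eq.
  assert (p_dvd : (p | n1 ^ (p - 2) * b)).
  { set (Q1 := fermat_quotient_int p n1) in quot_eq.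
    assert (D : (p | Q1 + (p - 1) * b * n1 ^ (p - 2) + p * b ^ 2 * t - Q1)).
    { apply Z.mod_divide; [lia|]. rewrite Zminus_mod, <- quot_eq, Z.sub_diag. reflexivity. }
    replace (n1 ^ (p - 2) * b)
      with (p * (b * n1 ^ (p - 2) + b ^ 2 * t) - (Q1 + (p - 1) * b * n1 ^ (p - 2) + p * b ^ 2 * t - Q1))
      by ring.
    apply Z.divide_sub_r; [apply Z.divide_factor_l|exact D]. }
  apply Gauss in p_dvd.
  - destruct p_dvd as [c def_b']. assert (c = 0) by nia. lia.
  - apply rel_prime_Zpower_r; [lia|].
    apply prime_rel_prime; assumption.
Qed.
End FermatQuotient.

Lemma NoDup_list_prod {A B : Type} (l1 : list A) (l2 : list B) :
  NoDup l1 -> NoDup l2 -> NoDup (list_prod l1 l2).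
Proof.
  intros l1_nodup l2_nodup. induction l1_nodup as [|x l1 x_notin _ IH]; [constructor|].
  simpl. apply NoDup_app; [|exact IH|].
  - apply NoDup_map_NoDup_ForallPairs; [|exact l2_nodup].
    intros y z _ _ E. congruence.
  - intros [a b] in_map in_prod. apply in_map_iff in in_map as [y [E _]].
    injection E as <- _. apply in_prod_iff in in_prod. tauto.
Qed.

Lemma length_le_boxes {A B : Type} (l : list A) (boxes : list B) (in_box : B -> A -> bool)
    (M : nat) :
  NoDup l -> (forall a, In a l -> exists b, In b boxes /\ in_box b a = true) ->
  (forall b, In b boxes -> (length (filter (in_box b) l) <= M)%nat) ->
  (length l <= length boxes * M)%nat.
Proof.
  intros l_nodup covered bounded.
  transitivity (length (flat_map (fun b => filter (in_box b) l) boxes)).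
  - apply NoDup_incl_length; [exact l_nodup|].
    intros a a_in. destruct (covered a a_in) as [b [b_in a_in_b]].
    apply in_flat_map. exists b. split; [exact b_in|]. apply filter_In. auto.
  - clear covered. induction boxes as [|b boxes IH]; [reflexivity|].
    simpl. rewrite length_app.
    pose proof (bounded b (or_introl eq_refl)).
    assert (length (flat_map (fun b => filter (in_box b) l) boxes) <= length boxes * M)%nat
      by (apply IH; intros; apply bounded; simpl; auto).
    lia.
Qed.

Lemma exists_common_bound {B : Type} (P : nat -> Prop) (f : B -> nat) (bs : list B) :
  P 0%nat -> (forall b, In b bs -> P (f b)) ->
  exists M, P M /\ forall b, In b bs -> (f b <= M)%nat.
Proof.
  intros P0 Pf. induction bs as [|b bs IH].
  - exists 0%nat. split; [exact P0|]. intros b [].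
  - destruct IH as [M [PM M_bound]]; [intros; apply Pf; simpl; auto|].
    exists (Nat.max (f b) M). split.
    + apply Nat.max_case; [apply Pf; simpl|]; auto.
    + intros c [<-|c_in]; [apply Nat.le_max_l|].
      specialize (M_bound c c_in). lia.
Qed.

Section Counting.
Variables p k h : Z.
Hypothesis p_prime : prime p.
Hypothesis h_ge1 : 1 <= h.

Let p_ge2 : 2 <= p := prime_ge_2 p p_prime.

Lemma not_divide_small u : 0 < u < p -> ~ (p | u).
Proof. intros u_bound p_dvd_u. apply Z.divide_pos_le in p_dvd_u; lia. Qed.

Definition units_in_U : list Z :=
  filter (in_U p k h) (map Z.of_nat (seq 1 (Z.to_nat p - 1))).

Lemma U_le_succ_length : (U p k h <= S (length units_in_U))%nat.
Proof.
  unfold U, units_in_U.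
  replace (Z.to_nat p) with (S (Z.to_nat p - 1)) at 1 by lia.
  simpl. destruct (in_U p k h 0); simpl; lia.
Qed.

Lemma in_units_in_U u : In u units_in_U ->
  0 < u < p /\ exists j, 0 <= j < h /\ (fermat_quotient p u - (k + 1 + j)) mod p = 0.
Proof.
  unfold units_in_U, in_U. intros [u_in u_U]%filter_In.
  apply in_map_iff in u_in as [x [<- x_in]]. apply in_seq in x_in.
  split; [lia|].
  apply existsb_exists in u_U as [j [j_in E]]. apply in_seq in j_in. apply Z.eqb_eq in E.
  exists (Z.of_nat j). split; [lia|exact E].
Qed.

Lemma units_in_U_NoDup : NoDup units_in_U.
Proof.
  apply NoDup_filter, NoDup_map_NoDup_ForallPairs; [|apply seq_NoDup].
  intros x y _ _. lia.
Qed.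

Definition pairs : list (Z * Z) := list_prod units_in_U units_in_U.

(* Box (a, c) collects the pairs (u, v) with u v = a and q_p(u) + q_p(v) = 2k + 2 + c (mod p);
   if q_p(u) = k + 1 + i and q_p(v) = k + 1 + j, the pair lies in box (u v mod p, i + j). *)
Definition in_box (b : nat * nat) (x : Z * Z) : bool :=
  ((fst x * snd x) mod p =? Z.of_nat (fst b)) &&
  ((fermat_quotient p (fst x) + fermat_quotient p (snd x) - (2 * k + 2 + Z.of_nat (snd b))) mod p =? 0).

Definition boxes : list (nat * nat) := list_prod (seq 0 (Z.to_nat p)) (seq 0 (2 * Z.to_nat h)).

Lemma pair_in_some_box x : In x pairs -> exists b, In b boxes /\ in_box b x = true.
Proof.
  destruct x as [u v]. intros [u_in v_in]%in_prod_iff.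
  destruct (in_units_in_U u u_in) as [_ [i [i_bound Eu]]].
  destruct (in_units_in_U v v_in) as [_ [j [j_bound Ev]]].
  pose proof (Z.mod_pos_bound (u * v) p ltac:(lia)).
  exists (Z.to_nat ((u * v) mod p), Z.to_nat (i + j)). split.
  - apply in_prod; apply in_seq; lia.
  - unfold in_box. cbn [fst snd]. apply andb_true_intro. rewrite !Z.eqb_eq. split; [lia|].
    apply Z.mod_divide in Eu; [|lia]. apply Z.mod_divide in Ev; [|lia].
    apply Z.mod_divide; [lia|].
    replace (Z.of_nat (Z.to_nat (i + j))) with (i + j) by lia.
    replace (fermat_quotient p u + fermat_quotient p v - (2 * k + 2 + (i + j)))
      with ((fermat_quotient p u - (k + 1 + i)) + (fermat_quotient p v - (k + 1 + j))) by ring.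
    apply Z.divide_add_r; assumption.
Qed.

Lemma box_product_unique b x y :
  In x (filter (in_box b) pairs) -> In y (filter (in_box b) pairs) -> fst x * snd x = fst y * snd y.
Proof.
  destruct x as [u1 v1], y as [u2 v2]. cbn [fst snd].
  intros [[u1_in v1_in]%in_prod_iff in1]%filter_In [[u2_in v2_in]%in_prod_iff in2]%filter_In.
  destruct (in_units_in_U u1 u1_in) as [u1_bound _], (in_units_in_U v1 v1_in) as [v1_bound _].
  destruct (in_units_in_U u2 u2_in) as [u2_bound _], (in_units_in_U v2 v2_in) as [v2_bound _].
  unfold in_box in in1, in2. cbn [fst snd] in in1, in2.
  apply andb_prop in in1 as [mod1 q1], in2 as [mod2 q2]. apply Z.eqb_eq in mod1, mod2, q1, q2.
  apply (fermat_quotient_int_inj p); [assumption|nia|nia| |congruence|].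
  - intros D. destruct (prime_mult p p_prime _ _ D) as [Du|Dv];
      revert Du || revert Dv; apply not_divide_small; assumption.
  - rewrite !fermat_quotient_int_mul_mod by (assumption || lia || (apply not_divide_small; assumption)).
    apply Z.mod_divide in q1 as [c1 E1]; [|lia]. apply Z.mod_divide in q2 as [c2 E2]; [|lia].
    set (target := 2 * k + 2 + Z.of_nat (snd b)) in *.
    replace (fermat_quotient p u1 + fermat_quotient p v1) with (target + c1 * p) by lia.
    replace (fermat_quotient p u2 + fermat_quotient p v2) with (target + c2 * p) by lia.
    rewrite !Z_mod_plus_full. reflexivity.
Qed.

Section DivisorBound.
Variables (m : nat) (C : Z).
Hypothesis C_pos : 0 < C.
Hypothesis divisor_bound : forall (n : Z) (l : list Z), 0 < n -> NoDup l ->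
  (forall d, In d l -> 0 < d /\ (d | n)) -> Z.of_nat (length l) ^ Z.of_nat m <= C * n.

Lemma box_size_bound b :
  Z.of_nat (length (filter (in_box b) pairs)) ^ Z.of_nat m <= C * (p * p).
Proof.
  assert (in_pairs : forall x, In x (filter (in_box b) pairs) -> 0 < fst x < p /\ 0 < snd x < p).
  { intros [u v] [[u_in v_in]%in_prod_iff _]%filter_In.
    split; apply in_units_in_U; assumption. }
  destruct (filter (in_box b) pairs) as [|x0 rest] eqn:E_box.
  - cbn [length]. destruct m; [simpl; nia|rewrite Z.pow_0_l by lia; nia].
  - set (n := fst x0 * snd x0).
    assert (x0_in : In x0 (x0 :: rest)) by (left; reflexivity).
    assert (same_n : forall x, In x (x0 :: rest) -> fst x * snd x = n).
    { intros x x_in. rewrite <- E_box in x_in, x0_in. exact (box_product_unique b x x0 x_in x0_in). }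
    destruct (in_pairs x0 x0_in) as [x0_fst x0_snd].
    rewrite <- (length_map fst).
    transitivity (C * n); [|apply Z.mul_le_mono_nonneg_l; unfold n; nia].
    apply divisor_bound; [unfold n; nia| |].
    + apply NoDup_map_NoDup_ForallPairs.
      * intros [u1 v1] [u2 v2] in1 in2 E. cbn [fst] in E. subst u2.
        pose proof (same_n _ in1) as prod1. pose proof (same_n _ in2) as prod2.
        pose proof (in_pairs _ in1) as B1. cbn [fst snd] in *.
        f_equal. apply (Z.mul_reg_l _ _ u1); lia.
      * rewrite <- E_box. apply NoDup_filter, NoDup_list_prod; apply units_in_U_NoDup.
    + intros d [[u v] [<- x_in]]%in_map_iff. cbn [fst].
      split; [apply (in_pairs _ x_in)|].
      exists v. rewrite <- (same_n _ x_in). cbn [fst snd]. ring.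
Qed.

Lemma units_in_U_sq_bound : exists M : nat,
  Z.of_nat M ^ Z.of_nat m <= C * (p * p) /\
  Z.of_nat (length units_in_U) ^ 2 <= 2 * p * h * Z.of_nat M.
Proof.
  destruct (exists_common_bound (fun M => Z.of_nat M ^ Z.of_nat m <= C * (p * p))
              (fun b => length (filter (in_box b) pairs)) boxes) as [M [M_pow M_bound]].
  - destruct m; [simpl; nia|rewrite Z.pow_0_l by lia; nia].
  - intros b _. apply box_size_bound.
  - exists M. split; [exact M_pow|].
    pose proof (length_le_boxes pairs boxes in_box M
      (NoDup_list_prod _ _ units_in_U_NoDup units_in_U_NoDup) pair_in_some_box M_bound) as L.
    unfold pairs, boxes in L. rewrite !length_prod, !length_seq in L. nia.
Qed.
End DivisorBound.
End Counting.

Lemma pow_bound_of_sq_bound (m U N M C p h : Z) : 1 <= m -> 0 <= U <= N + 1 -> 0 <= M -> 0 <= C ->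
  N ^ 2 <= 2 * p * h * M -> M ^ m <= C * (p * p) -> 8 ^ m * (C + 1) <= p -> 1 <= h ->
  U ^ (2 * m) <= h ^ m * p ^ (m + 4).
Proof.
  intros m_ge1 U_bound M_ge0 C_ge0 N_sq M_pow p_large h_ge1.
  assert (eight_pow : 0 < 8 ^ m) by (apply Z.pow_pos_nonneg; lia).
  assert (h_pow : 0 < h ^ m) by (apply Z.pow_pos_nonneg; lia).
  assert (p_ge1 : 1 <= p) by nia.
  assert (p_pow : 0 < p ^ m) by (apply Z.pow_pos_nonneg; lia).
  rewrite Z.pow_add_r, Z.pow_mul_r by lia.
  replace (p ^ 4) with (p * p * p * p) by ring.
  destruct (Z.le_gt_cases U 1) as [U_small|U_large].
  - transitivity (1 ^ m); [apply Z.pow_le_mono_l; nia|].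
    rewrite Z.pow_1_l by lia. nia.
  - assert (U_sq : U ^ 2 <= 8 * p * h * M).
    { rewrite Z.pow_2_r in *.
      assert (U * U <= (2 * N) * (2 * N)) by (apply Z.mul_le_mono_nonneg; lia).
      lia. }
    transitivity ((8 * p * h * M) ^ m); [apply Z.pow_le_mono_l; nia|].
    assert (M_part : 8 ^ m * M ^ m <= p * (p * p)).
    { transitivity (8 ^ m * (C * (p * p))); [apply Z.mul_le_mono_nonneg_l; lia|nia]. }
    rewrite !Z.pow_mul_l.
    set (hm := h ^ m) in *. set (pm := p ^ m) in *. set (Mm := M ^ m) in *.
    transitivity ((p * (p * p)) * (pm * hm)).
    + replace (8 ^ m * pm * hm * Mm) with ((8 ^ m * Mm) * (pm * hm)) by ring.
      apply Z.mul_le_mono_nonneg_r; lia.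
    + nia.
Qed.

Open Scope R_scope.

Lemma le_sqrt_Rpower_of_pow_le (x h p eps : R) (m : nat) : 0 <= x -> 1 <= h -> 1 < p ->
  2 <= INR m * eps -> x ^ (2 * m) <= h ^ m * p ^ (m + 4) ->
  x <= sqrt h * Rpower p (1 / 2 + eps).
Proof.
  intros x_ge0 h_ge1 p_gt1 m_large x_pow.
  set (a := 1 / 2 + eps).
  set (y := sqrt h * Rpower p a).
  assert (y_pos : 0 < y) by (apply Rmult_lt_0_compat; [apply sqrt_lt_R0; lra|apply exp_pos]).
  destruct (Rle_lt_dec x y) as [|y_lt_x]; [assumption|exfalso].
  assert (m_pos : (0 < m)%nat) by (destruct m; simpl in m_large; [lra|lia]).
  assert (y_pow : y ^ (2 * m) = h ^ m * Rpower p (a * INR (2 * m))).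
  { unfold y. rewrite Rpow_mult_distr, pow_mult, pow2_sqrt by lra.
    rewrite <- (Rpower_pow (2 * m) (Rpower p a)) by apply exp_pos.
    rewrite Rpower_mult. reflexivity. }
  assert (p_pow : p ^ (m + 4) <= Rpower p (a * INR (2 * m))).
  { rewrite <- Rpower_pow by lra. apply Rle_Rpower; [lra|].
    rewrite plus_INR, mult_INR. unfold a. simpl. nra. }
  assert (x_pow_large : y ^ (2 * m) < x ^ (2 * m)).
  { rewrite <- !Rpower_pow by lra. apply Rlt_Rpower_l; [apply lt_0_INR; lia|lra]. }
  assert (h_pow : 0 <= h ^ m) by (apply pow_le; lra).
  nra.
Qed.

Theorem theorem9 :
  forall eps : R, (0 < eps)%R ->
  exists P0 : Z, forall p k h : Z,
    prime p -> (P0 <= p)%Z -> (1 <= h)%Z ->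
    (INR (U p k h) <= sqrt (IZR h) * Rpower (IZR p) (1/2 + eps))%R.
Proof.
  intros eps eps_pos.
  destruct (INR_unbounded (2 / eps)) as [m m_large].
  assert (m_eps : 2 <= INR m * eps).
  { assert (2 / eps * eps = 2) by (field; lra). nra. }
  assert (m_pos : (0 < m)%nat) by (destruct m; simpl in m_eps; [lra|lia]).
  destruct (NatNumberTheory.divisor_list_bound m) as [C [C_pos divisor_bound]].
  exists (8 ^ Z.of_nat m * (C + 1))%Z.
  intros p k h p_prime p_large h_ge1.
  pose proof (prime_ge_2 p p_prime) as p_ge2.
  destruct (units_in_U_sq_bound p k h p_prime h_ge1 m C C_pos divisor_bound) as [M [M_pow L_sq]].
  apply (le_sqrt_Rpower_of_pow_le _ _ _ _ m);
    [apply pos_INR|apply IZR_le; lia|apply IZR_lt; lia|exact m_eps|].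
  rewrite INR_IZR_INZ, !pow_IZR, <- mult_IZR. apply IZR_le.
  rewrite Nat2Z.inj_mul, Nat2Z.inj_add.
  pose proof (U_le_succ_length p k h p_prime).
  apply (pow_bound_of_sq_bound _ _ (Z.of_nat (length (units_in_U p k h))) (Z.of_nat M) C); lia.
Qed.
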